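(* For every positive integer $k$, any deterministic distributed algorithm in the LOCAL model that finds a proper $3$-coloring of $G_k$ (for every assignment of unique identifiers to its vertices) requires at least $k=\frac{1}{6}(|V(G_k)|-2)$ rounds.
   Context: The outerplanar graphs $G_k$ are defined inductively. $G_0$ has vertex set $\{v_0,u_0\}$ and the single edge $\{v_0,u_0\}$. For $i\ge 1$, $G_i$ is obtained from $G_{i-1}$ by adding six new vertices $a_i,b_i,c_i,d_i,v_i,u_i$ and the edges $\{a_i,b_i\},\{c_i,d_i\},\{a_i,v_i\},\{b_i,v_i\},\{c_i,u_i\},\{d_i,u_i\},\{a_i,v_{i-1}\},\{b_i,v_{i-1}\},\{c_i,u_{i-1}\},\{d_i,u_{i-1}\}$. LOCAL model: the network is the graph, each vertex has a unique identifier, and in synchronous rounds each vertex receives the previous round's messages, computes arbitrarily and sends messages of unbounded size to its neighbors; at the end each vertex outputs its color. A proper $3$-coloring assigns colors in $\{1,2,3\}$ with adjacent vertices colored differently. *)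

From mathcomp Require Import all_boot.
Set Implicit Arguments. Unset Strict Implicit. Unset Printing Implicit Defensive.

(* Vertices of G_k are 'I_(6*k+2), encoded as follows:
     v_i = 6 i,  u_i = 6 i + 1            (0 <= i <= k)
     a_i = 6 i - 4, b_i = 6 i - 3, c_i = 6 i - 2, d_i = 6 i - 1   (1 <= i <= k) *)
Definition vtx_v (i : nat) : nat := 6 * i.
Definition vtx_u (i : nat) : nat := 6 * i + 1.
Definition vtx_a (i : nat) : nat := 6 * i - 4.
Definition vtx_b (i : nat) : nat := 6 * i - 3.
Definition vtx_c (i : nat) : nat := 6 * i - 2.
Definition vtx_d (i : nat) : nat := 6 * i - 1.

Definition edges_at (i : nat) : seq (nat * nat) :=
  [:: (vtx_a i, vtx_b i); (vtx_c i, vtx_d i);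
      (vtx_a i, vtx_v i); (vtx_b i, vtx_v i);
      (vtx_c i, vtx_u i); (vtx_d i, vtx_u i);
      (vtx_a i, vtx_v i.-1); (vtx_b i, vtx_v i.-1);
      (vtx_c i, vtx_u i.-1); (vtx_d i, vtx_u i.-1)].

Definition Gk_edges (k : nat) : seq (nat * nat) :=
  (vtx_v 0, vtx_u 0) :: flatten [seq edges_at i | i <- iota 1 k].

Definition Gk_vertex (k : nat) : finType := 'I_(6 * k + 2).

Definition Gk_adj (k : nat) : rel (Gk_vertex k) :=
  fun x y => (((x : nat), (y : nat)) \in Gk_edges k)
          || (((y : nat), (x : nat)) \in Gk_edges k).

(* An algorithm with state type S
   consists of
     init : ID -> degree -> S        initial local knowledge,
     step : S -> (nat -> option S) -> S
            new state from own state and the messages of the previous round;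
            the second argument maps the identifier j of a neighbour to the
            message (its whole state, which is w.l.o.g. since messages are
            unbounded) sent by that neighbour, and to None if no neighbour
            has identifier j,
     out  : S -> 'I_3                 the output colour (color c+1 for c : 'I_3). *)

Section Local.
Variables (V : finType) (adj : rel V) (S : Type).

Definition degree (v : V) : nat := #|[set w | adj v w]|.

Definition inbox (id : V -> nat) (st : V -> S) (v : V) : nat -> option S :=
  fun j => omap st [pick w | adj v w && (id w == j)].

Fixpoint local_state (init : nat -> nat -> S) (step : S -> (nat -> option S) -> S)
    (id : V -> nat) (t : nat) : V -> S :=
  match t with
  | 0 => fun v => init (id v) (degree v)
  | t'.+1 => let st := local_state init step id t' in
             fun v => step (st v) (inbox id st v)
  end.

Definition local_output (init : nat -> nat -> S) (step : S -> (nat -> option S) -> S)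
    (out : S -> 'I_3) (id : V -> nat) (r : nat) (v : V) : 'I_3 :=
  out (local_state init step id r v).

End Local.

Definition proper_coloring (V : finType) (adj : rel V) (col : V -> 'I_3) : Prop :=
  forall x y, adj x y -> col x != col y.

From Pilot Require Import Defs.
From mathcomp Require Import all_boot zify.
From Stdlib Require Import FunctionalExtensionality.
Set Implicit Arguments. Unset Strict Implicit. Unset Printing Implicit Defensive.

(* Mirroring (v_i <-> u_i, a_i <-> c_i, b_i <-> d_i) is an automorphism of G_k, and in a proper
   3-colouring the diamond a_i b_i with apexes v_(i-1), v_i forces all v_i to share a colour,
   likewise all u_i; so v_k and u_k are coloured differently.  Give a vertex x of the v-side
   (v_i, a_i, b_i) the identifier 4x + p and a vertex x of the u-side 4 mirror(x) + q.
   Mirroring exchanges p and q, so the colour of u_k under (p, q) is that of v_k under (q, p).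
   If r < k, the r-ball around v_k lies in the v-side, so the colour of v_k only depends on p,
   say f(p); then f(p) <> f(q) for all distinct p, q < 4: four distinct colours out of three. *)

Fixpoint in_ball (V : Type) (adj : rel V) (t : nat) (x w : V) : Prop :=
  match t with
  | 0 => w = x
  | t'.+1 => w = x \/ exists2 y, adj x y & in_ball adj t' y w
  end.

Section Ball.
Variables (V : Type) (adj : rel V).

Lemma in_ball_center t x : in_ball adj t x x.
Proof. by case: t => [|t] /=; [|left]. Qed.

Lemma in_ballS t x w : in_ball adj t x w -> in_ball adj t.+1 x w.
Proof.
elim: t x => [|t IHt] x /=; first by move->; left.
by case=> [->|[y xy yw]]; [left | right; exists y => //; apply: IHt].
Qed.

End Ball.

Section Isomorphism.
Variables (V1 V2 : finType) (adj1 : rel V1) (adj2 : rel V2).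
Variables (phi : V1 -> V2) (psi : V2 -> V1).
Hypotheses (phiK : cancel phi psi) (psiK : cancel psi phi).
Hypothesis adj_phi : forall x y, adj2 (phi x) (phi y) = adj1 x y.
Variables (S : Type) (init : nat -> nat -> S) (step : S -> (nat -> option S) -> S).

Lemma degree_iso x : degree adj2 (phi x) = degree adj1 x.
Proof.
rewrite /degree -(card_imset _ (can_inj phiK)); congr #|pred_of_set _|.
apply/setP => w; rewrite inE; apply/idP/imsetP => [xw | [y + ->]].
  by exists (psi w); rewrite ?psiK // inE -adj_phi psiK.
by rewrite inE adj_phi.
Qed.

Lemma local_state_iso_ball (id1 : V1 -> nat) (id2 : V2 -> nat) : injective id2 ->
  forall t x, (forall w, in_ball adj1 t x w -> id2 (phi w) = id1 w) ->
  local_state adj2 init step id2 t (phi x) = local_state adj1 init step id1 t x.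
Proof.
move=> id2_inj; elim=> [|t IHt] x ids_ball /=.
  by rewrite ids_ball ?degree_iso.
have id_nbr y : adj1 x y -> id2 (phi y) = id1 y.
  by move=> xy; apply: ids_ball; right; exists y; last exact: in_ball_center.
congr step; first by apply: IHt => w xw; apply: ids_ball; apply: in_ballS.
apply: functional_extensionality => j; rewrite /inbox.
case: pickP => [y /andP[xy /eqP idy] | no_y]; case: pickP => [z /andP[xz /eqP idz] | no_z] //=.
- have -> : y = phi z by apply: id2_inj; rewrite idy id_nbr // idz.
  congr Some; apply: IHt => w zw; apply: ids_ball; right; exists z => //.
- have xy' : adj1 x (psi y) by rewrite -adj_phi psiK.
  by move: (no_z (psi y)); rewrite xy' -id_nbr // psiK idy eqxx.
- by move: (no_y (phi z)); rewrite adj_phi xz id_nbr // idz eqxx.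
Qed.

Lemma local_output_iso (out : S -> 'I_3) (id1 : V1 -> nat) (id2 : V2 -> nat) r x :
  injective id2 -> (forall w, id2 (phi w) = id1 w) ->
  local_output adj2 init step out id2 r (phi x) = local_output adj1 init step out id1 r x.
Proof. by move=> id2_inj ids; rewrite /local_output (@local_state_iso_ball id1). Qed.

End Isomorphism.

Lemma local_output_ball (V : finType) (adj : rel V) (S : Type) (init : nat -> nat -> S)
    (step : S -> (nat -> option S) -> S) (out : S -> 'I_3) (id1 id2 : V -> nat) r x :
  injective id2 -> (forall w, in_ball adj r x w -> id2 w = id1 w) ->
  local_output adj init step out id2 r x = local_output adj init step out id1 r x.
Proof.
move=> id2_inj ids; rewrite /local_output; congr out.
exact: (@local_state_iso_ball _ _ adj adj id id (frefl _) (frefl _) (fun _ _ => erefl)).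
Qed.

Lemma proper_coloring_diamond (V : finType) (adj : rel V) (col : V -> 'I_3) :
  proper_coloring adj col -> forall a b x y,
  adj a b -> adj a x -> adj b x -> adj a y -> adj b y -> col x = col y.
Proof.
move=> proper a b x y ab ax bx ay b_y.
move: (proper _ _ ab) (proper _ _ ax) (proper _ _ bx) (proper _ _ ay) (proper _ _ b_y).
case: (col a) (col b) (col x) (col y) => [ca ?] [cb ?] [cx ?] [cy ?].
rewrite -!val_eqE /= => *; apply: val_inj => /=; lia.
Qed.

(* In the encoding of [Defs], [v_side] selects v_i, a_i, b_i and [mirror] is the mirroring. *)
Definition v_side (x : nat) : bool := [|| x %% 6 == 0, x %% 6 == 2 | x %% 6 == 3].

Definition mirror (x : nat) : nat :=
  match x %% 6 with 0 => x + 1 | 1 => x - 1 | 2 | 3 => x + 2 | _ => x - 2 end.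

Lemma mirror_cases x : [\/ x %% 6 = 0 /\ mirror x = x + 1, x %% 6 = 1 /\ mirror x = x - 1,
  2 <= x %% 6 <= 3 /\ mirror x = x + 2 | 4 <= x %% 6 /\ mirror x = x - 2].
Proof.
rewrite /mirror; have : x %% 6 < 6 by rewrite ltn_pmod.
case: (x %% 6) => [|[|[|[|[|[|n]]]]]] //= _;
  by [constructor 1 | constructor 2 | constructor 3 | constructor 4].
Qed.

Lemma mirrorK : involutive mirror.
Proof. by move=> x; case: (mirror_cases x); case: (mirror_cases (mirror x)); lia. Qed.

Lemma v_side_mirror x : v_side (mirror x) = ~~ v_side x.
Proof. by rewrite /v_side; case: (mirror_cases x); lia. Qed.

Lemma v_side_v i : v_side (vtx_v i). Proof. rewrite /v_side /vtx_v; lia. Qed.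
Lemma v_side_u i : v_side (vtx_u i) = false. Proof. rewrite /v_side /vtx_u; lia. Qed.
Lemma v_side_a i : 0 < i -> v_side (vtx_a i). Proof. rewrite /v_side /vtx_a; lia. Qed.
Lemma v_side_b i : 0 < i -> v_side (vtx_b i). Proof. rewrite /v_side /vtx_b; lia. Qed.
Lemma v_side_c i : 0 < i -> v_side (vtx_c i) = false. Proof. rewrite /v_side /vtx_c; lia. Qed.
Lemma v_side_d i : 0 < i -> v_side (vtx_d i) = false. Proof. rewrite /v_side /vtx_d; lia. Qed.

Lemma mirror_v i : mirror (vtx_v i) = vtx_u i.
Proof. by rewrite /vtx_v /vtx_u; case: (mirror_cases (6 * i)); lia. Qed.

Lemma mirror_u i : mirror (vtx_u i) = vtx_v i.
Proof. by rewrite -mirror_v mirrorK. Qed.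

Lemma mirror_a i : 0 < i -> mirror (vtx_a i) = vtx_c i.
Proof. by rewrite /vtx_a /vtx_c; case: (mirror_cases (6 * i - 4)); lia. Qed.

Lemma mirror_b i : 0 < i -> mirror (vtx_b i) = vtx_d i.
Proof. by rewrite /vtx_b /vtx_d; case: (mirror_cases (6 * i - 3)); lia. Qed.

Lemma mirror_c i : 0 < i -> mirror (vtx_c i) = vtx_a i.
Proof. by move=> i_gt0; rewrite -mirror_a // mirrorK. Qed.

Lemma mirror_d i : 0 < i -> mirror (vtx_d i) = vtx_b i.
Proof. by move=> i_gt0; rewrite -mirror_b // mirrorK. Qed.

Lemma mirror_edges_at i x y :
  0 < i -> (x, y) \in edges_at i -> (mirror x, mirror y) \in edges_at i.
Proof.
move=> i_gt0; rewrite !inE !xpair_eqE.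
by do ![case/orP=> [/andP[/eqP-> /eqP->]|] | case/andP=> /eqP-> /eqP->];
  rewrite ?mirror_v ?mirror_u ?mirror_a ?mirror_b ?mirror_c ?mirror_d // !eqxx ?orbT.
Qed.

Lemma edges_at_local i : 0 < i ->
  all (fun e => (v_side e.1 == v_side e.2) && (e.1 <= e.2 + 4 <= e.1 + 8)) (edges_at i).
Proof.
move=> i_gt0; rewrite /= !v_side_v !v_side_u ?v_side_a ?v_side_b ?v_side_c ?v_side_d //=.
rewrite /vtx_a /vtx_b /vtx_c /vtx_d /vtx_v /vtx_u; lia.
Qed.

Lemma edges_at_bound i : all (fun e => (e.1 <= 6 * i + 1) && (e.2 <= 6 * i + 1)) (edges_at i).
Proof. rewrite /= /vtx_a /vtx_b /vtx_c /vtx_d /vtx_v /vtx_u; lia. Qed.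

Lemma Gk_edges_cases k x y : (x, y) \in Gk_edges k ->
  (x, y) = (0, 1) \/ exists2 i, 0 < i <= k & (x, y) \in edges_at i.
Proof.
rewrite in_cons => /orP[/eqP-> | /flatten_mapP[i]]; first by left.
by rewrite mem_iota => i_range xy; right; exists i => //; lia.
Qed.

Lemma edges_at_Gk_edges k i e : 0 < i <= k -> e \in edges_at i -> e \in Gk_edges k.
Proof.
move=> i_range ei; rewrite in_cons; apply/orP; right.
by apply/flatten_mapP; exists i; rewrite // mem_iota; lia.
Qed.

Definition Gk_of_nat k (n : nat) : Gk_vertex k :=
  Ordinal (ltn_pmod n (ltn_addl (6 * k) (isT : 0 < 2))).

Lemma Gk_of_natE k n : n < 6 * k + 2 -> Gk_of_nat k n = n :> nat.
Proof. exact: modn_small. Qed.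

Lemma Gk_adj_edges_at k i x y : 0 < i <= k -> (x, y) \in edges_at i ->
  Gk_adj (Gk_of_nat k x) (Gk_of_nat k y).
Proof.
move=> i_range xy; have /andP[/= x_le y_le] := allP (edges_at_bound i) _ xy.
by rewrite /Gk_adj !Gk_of_natE ?(edges_at_Gk_edges i_range xy) //; lia.
Qed.

Lemma Gk_coloring_ends k (col : Gk_vertex k -> 'I_3) : proper_coloring (@Gk_adj k) col ->
  col (Gk_of_nat k (vtx_v k)) != col (Gk_of_nat k (vtx_u k)).
Proof.
move=> proper.
have ends_same i : i <= k -> col (Gk_of_nat k (vtx_v i)) = col (Gk_of_nat k (vtx_v 0)) /\
                               col (Gk_of_nat k (vtx_u i)) = col (Gk_of_nat k (vtx_u 0)).
  elim: i => [//|i IHi] i_lt_k; have [<- <-] := IHi (ltnW i_lt_k).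
  have edge x y : (x, y) \in edges_at i.+1 -> Gk_adj (Gk_of_nat k x) (Gk_of_nat k y).
    by apply: Gk_adj_edges_at; rewrite i_lt_k.
  split.
  - apply: (proper_coloring_diamond proper (a := Gk_of_nat k (vtx_a i.+1))
                                           (b := Gk_of_nat k (vtx_b i.+1)));
      by apply: edge; rewrite !inE eqxx ?orbT.
  - apply: (proper_coloring_diamond proper (a := Gk_of_nat k (vtx_c i.+1))
                                           (b := Gk_of_nat k (vtx_d i.+1)));
      by apply: edge; rewrite !inE eqxx ?orbT.
have [-> ->] := ends_same k (leqnn k).
apply: proper; rewrite /Gk_adj !Gk_of_natE /vtx_v /vtx_u ?mem_head //; lia.
Qed.

Lemma Gk_mirror_subproof k (x : Gk_vertex k) : mirror x < 6 * k + 2.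
Proof. by have := ltn_ord x; case: (mirror_cases x); lia. Qed.

Definition Gk_mirror k (x : Gk_vertex k) : Gk_vertex k := Ordinal (Gk_mirror_subproof x).

Lemma Gk_mirrorE k (x : Gk_vertex k) : Gk_mirror x = mirror x :> nat.
Proof. by []. Qed.

Lemma Gk_mirrorK k : involutive (@Gk_mirror k).
Proof. by move=> x; apply: val_inj; rewrite /= mirrorK. Qed.

Lemma Gk_mirror_v k i : i <= k -> Gk_mirror (Gk_of_nat k (vtx_v i)) = Gk_of_nat k (vtx_u i).
Proof.
by move=> i_le_k; apply: ord_inj; rewrite Gk_mirrorE !Gk_of_natE ?mirror_v // /vtx_v /vtx_u; lia.
Qed.

Lemma Gk_edges_mirror k x y : (x, y) \in Gk_edges k ->
  ((mirror x, mirror y) \in Gk_edges k) || ((mirror y, mirror x) \in Gk_edges k).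
Proof.
case/Gk_edges_cases => [[-> ->] | [i i_range xy]].
  by rewrite -[0]/(vtx_v 0) -[1]/(vtx_u 0) mirror_u mirror_v mem_head orbT.
by rewrite (edges_at_Gk_edges i_range (mirror_edges_at _ xy)) //; case/andP: i_range.
Qed.

Lemma Gk_adj_mirror k (x y : Gk_vertex k) : Gk_adj (Gk_mirror x) (Gk_mirror y) = Gk_adj x y.
Proof.
suff mirror_adj (u w : Gk_vertex k) : Gk_adj u w -> Gk_adj (Gk_mirror u) (Gk_mirror w).
  by apply/idP/idP => [/mirror_adj|/mirror_adj //]; rewrite !Gk_mirrorK.
by rewrite /Gk_adj /= orbC => /orP[] /Gk_edges_mirror; rewrite orbC.
Qed.

Lemma Gk_adj_v_side k (x y : Gk_vertex k) : Gk_adj x y -> 0 < x -> v_side x ->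
  v_side y /\ x <= y + 4.
Proof.
have edge_local e : e \in Gk_edges k -> e = (0, 1) \/
    (v_side e.1 == v_side e.2) && (e.1 <= e.2 + 4 <= e.1 + 8).
  case: e => a b /Gk_edges_cases [-> | [i /andP[i_gt0 _] ab]]; first by left.
  by right; apply: (allP (edges_at_local i_gt0)).
by rewrite /Gk_adj => /orP[] /edge_local /= [[-> ->] | /andP[/eqP-> ?]] //; lia.
Qed.

Lemma v_side_ball k t (x w : Gk_vertex k) :
  in_ball (@Gk_adj k) t x w -> v_side x -> 4 * t < x -> v_side w.
Proof.
elim: t x => [|t IHt] x /=; first by move->.
case=> [-> // | [y xy yw] x_v t_lt].
have [y_v x_le] := Gk_adj_v_side xy (leq_ltn_trans (leq0n _) t_lt) x_v.
by apply: IHt yw y_v _; lia.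
Qed.

(* The residue modulo 4 ([p] or [q]) records the side of [x]. *)
Definition side_id (p q x : nat) : nat := if v_side x then 4 * x + p else 4 * mirror x + q.

Lemma side_id_inj p q : p < 4 -> q < 4 -> p != q -> injective (side_id p q).
Proof.
move=> p_lt4 q_lt4 pq x y; rewrite /side_id.
case: ifP => _; case: ifP => _ eq_id; try lia.
by rewrite -[x]mirrorK -[y]mirrorK; congr mirror; lia.
Qed.

Lemma side_id_mirror p q x : side_id q p (mirror x) = side_id p q x.
Proof. by rewrite /side_id v_side_mirror mirrorK; case: (v_side x). Qed.

Definition Gk_id k (p q : nat) (x : Gk_vertex k) : nat := side_id p q x.

Lemma Gk_id_inj k p q : p < 4 -> q < 4 -> p != q -> injective (@Gk_id k p q).
Proof. by move=> p_lt4 q_lt4 pq x y /side_id_inj eq_xy; apply/val_inj/eq_xy. Qed.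

Section GkOutput.
Variables (k : nat) (S : Type) (init : nat -> nat -> S) (step : S -> (nat -> option S) -> S).
Variables (out : S -> 'I_3) (r : nat).

Lemma Gk_output_mirror p q x : p < 4 -> q < 4 -> p != q ->
  local_output (@Gk_adj k) init step out (Gk_id p q) r (Gk_mirror x) =
  local_output (@Gk_adj k) init step out (Gk_id q p) r x.
Proof.
move=> p_lt4 q_lt4 pq.
apply: (local_output_iso (@Gk_mirrorK k) (@Gk_mirrorK k) (@Gk_adj_mirror k)) => [|w].
  exact: Gk_id_inj.
by rewrite /Gk_id /= side_id_mirror.
Qed.

Lemma Gk_output_v_side p q q' : r < k -> p < 4 -> q < 4 -> p != q ->
  local_output (@Gk_adj k) init step out (Gk_id p q) r (Gk_of_nat k (vtx_v k)) =
  local_output (@Gk_adj k) init step out (Gk_id p q') r (Gk_of_nat k (vtx_v k)).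
Proof.
move=> r_lt_k p_lt4 q_lt4 pq; apply: local_output_ball => [|w /v_side_ball ball_v].
  exact: Gk_id_inj.
by rewrite /Gk_id /side_id ball_v // Gk_of_natE ?v_side_v //; rewrite /vtx_v; lia.
Qed.

End GkOutput.

Theorem lemma6p9 (k : nat) (hk : 0 < k)
    (S : Type) (init : nat -> nat -> S) (step : S -> (nat -> option S) -> S)
    (out : S -> 'I_3) (r : nat) :
  (forall id : Gk_vertex k -> nat, injective id ->
     proper_coloring (@Gk_adj k)
       (local_output (@Gk_adj k) init step out id r)) ->
  k <= r /\ k = (#|Gk_vertex k| - 2) %/ 6.
Proof.
move=> solves; split; last by rewrite card_ord addnK mulKn.
rewrite leqNgt; apply/negP => r_lt_k.
pose col p q := local_output (@Gk_adj k) init step out (Gk_id p q) r (Gk_of_nat k (vtx_v k)).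
have col_swap p q : p < 4 -> q < 4 -> p != q -> col p q != col q p.
  move=> p_lt4 q_lt4 pq; have := Gk_coloring_ends (solves _ (Gk_id_inj p_lt4 q_lt4 pq)).
  by rewrite -Gk_mirror_v // Gk_output_mirror.
pose f (p : 'I_4) := col p (p.+1 %% 4).
have f_col (p : 'I_4) q : f p = col p q.
  by apply: Gk_output_v_side => //; have := ltn_ord p; lia.
suff /leq_card : injective f by rewrite !card_ord.
move=> p q; apply: contra_eq => pq.
by rewrite (f_col p q) (f_col q p); apply: col_swap; rewrite ?ltn_ord.
Qed.
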